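(* Let $n\ge 2$ and let $\mathcal{P}^c(Q_{4n})$ be the conjugacy super power graph of the generalized quaternion group $Q_{4n}$. (i) If $n$ is even, then $-(n+1)\sqrt2$ is an eigenvalue of the Sombor matrix of $\mathcal{P}^c(Q_{4n})$ with multiplicity at least $2n-2$. (ii) If $n$ is odd, then $-(2n+1)\sqrt2$ is an eigenvalue of the Sombor matrix of $\mathcal{P}^c(Q_{4n})$ with multiplicity at least $2n-1$.
   Context: For a finite simple graph $\Gamma$ with vertices $u_1,\dots,u_N$, the Sombor matrix $S(\Gamma)$ has $(i,j)$ entry $\sqrt{\deg(u_i)^2+\deg(u_j)^2}$ if $u_i,u_j$ are adjacent and $0$ otherwise. $Q_{4n}=\langle a,b: a^{2n}=e,\ a^n=b^2,\ ba=a^{-1}b\rangle$. The power graph $\mathcal{P}(G)$ has vertex set $G$, distinct $x,y$ adjacent iff $x\in\langle y\rangle$ or $y\in\langle x\rangle$. The conjugacy super power graph $\mathcal{P}^c(G)$ has vertex set $G$, and distinct $g,h$ are adjacent iff $g,h$ are conjugate in $G$ or there exist $g'$ conjugate to $g$ and $h'$ conjugate to $h$ that are adjacent in $\mathcal{P}(G)$. *)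

From mathcomp Require Import all_boot all_order all_algebra all_fingroup.
Set Implicit Arguments. Unset Strict Implicit. Unset Printing Implicit Defensive.
Import GRing.Theory Num.Theory.
Local Open Scope ring_scope.

Definition power_adj (gT : finGroupType) (x y : gT) : bool :=
  (x != y) && ((x \in <[y]>%g) || (y \in <[x]>%g)).

Definition cspg_adj (gT : finGroupType) (G : {set gT}) (g h : gT) : bool :=
  (g != h) &&
  ((g \in (h ^: G)%g) ||
   [exists g' in (g ^: G)%g, exists h' in (h ^: G)%g, power_adj g' h']).

Definition gdeg (T : finType) (V : {set T}) (adj : rel T) (x : T) : nat :=
  #|[set y in V | adj x y]|.

Definition sombor_matrix (R : rcfType) (T : finType) (V : {set T}) (adj : rel T)
  : 'M[R]_#|V| :=
  \matrix_(i < #|V|, j < #|V|)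
    let u := enum_val i in let v := enum_val j in
    if adj u v then
      Num.sqrt (((gdeg V adj u)%:R : R) ^+ 2 + ((gdeg V adj v)%:R : R) ^+ 2)
    else 0.

From mathcomp Require Import all_boot all_order all_algebra all_fingroup all_solvable.
From mathcomp Require Import ring zify.
Set Implicit Arguments. Unset Strict Implicit. Unset Printing Implicit Defensive.
Import GRing.Theory Num.Theory.
Local Open Scope ring_scope.

(* An element u of Q_4n outside <a> is y b with y in <a>, and u^2 = a^n is
   central of order 2, so <u> = {1, a^n, u, a^n u}.  Hence the neighbours of u
   in the conjugacy super power graph are 1, a^n and the rest of its twin class
   u^G :|: (a^n u)^G, which is the coset K u of K = <a^2, a^n>.  Members u, v of
   one twin class are adjacent closed twins of degree d = |K| + 1, so the Sombor
   rows satisfy S_u - S_v = d sqrt 2 (e_v - e_u), and each vertex that is not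
   the chosen representative of its class contributes a factor X + d sqrt 2 to
   the characteristic polynomial.  For n odd K = <a> and there is one class of
   size 2n; for n even K = <a^2> and there are two classes of size n. *)

Lemma det_twin_rows (R : comNzRingType) (N : nat) (M : 'M[R]_N) (T : {set 'I_N})
    (p : 'I_N -> 'I_N) (q : R) :
    {in T, forall i, p i \notin T} ->
    {in T, forall i j, M i j - M (p i) j = q * ((i == j)%:R - (p i == j)%:R)} ->
  exists r, \det M = q ^+ #|T| * r.
Proof.
move=> pT dM.
(* [M = (1 + E) *m diag d *m B]: for [i] in [T], row [i] of [B] is
   [e_i - e_(p i)] and [E] adds back row [p i], which [B] shares with [M]
   because [p i] is not in [T]. *)
pose E := \matrix_(i, k) ((i \in T) && (k == p i))%:R : 'M[R]_N.
pose B := \matrix_(i, j) if i \in T then (i == j)%:R - (p i == j)%:R else M i j.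
pose d := \row_i (if i \in T then q else 1).
have EK i j : (E *m (diag_mx d *m B)) i j = if i \in T then M (p i) j else 0.
  rewrite mxE (bigD1 (p i)) //= big1 ?addr0 => [|k /negbTE nk]; last first.
    by rewrite mxE nk andbF mul0r.
  rewrite mxE eqxx andbT mul_diag_mx !mxE.
  by case iT: (i \in T); rewrite ?mul0r // (negbTE (pT i iT)) !mul1r.
have -> : M = (1%:M + E) *m (diag_mx d *m B).
  apply/matrixP => i j; rewrite mulmxDl mul1mx mxE EK mul_diag_mx !mxE.
  case iT: (i \in T); last by rewrite mul1r addr0.
  by rewrite -dM // subrK.
exists (\det (1%:M + E) * \det B).
rewrite !det_mulmx det_diag mulrCA; congr (_ * _).
rewrite -prodr_const (bigID (mem T)) /= [X in _ * X]big1 ?mulr1 => [|i /negbTE iT].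
  by apply: eq_bigr => i iT; rewrite mxE iT.
by rewrite mxE iT.
Qed.

Lemma char_poly_twin_rows (F : fieldType) (N : nat) (M : 'M[F]_N) (T : {set 'I_N})
    (p : 'I_N -> 'I_N) (c : F) :
    {in T, forall i, p i \notin T} ->
    {in T, forall i j, M i j - M (p i) j = c * ((p i == j)%:R - (i == j)%:R)} ->
  (#|T| <= mup (- c) (char_poly M))%N.
Proof.
move=> pT dM; have [r defM] : exists r, char_poly M = ('X + c%:P) ^+ #|T| * r.
  apply: det_twin_rows pT _ => i iT j; rewrite !mxE.
  rewrite -!(mulr_natr 'X).
  transitivity ('X * ((i == j)%:R - (p i == j)%:R) - (M i j - M (p i) j)%:P).
    by rewrite polyCB; ring.
  by rewrite dM // polyCM polyCB !polyC_natr; ring.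
have nz : char_poly M != 0 by exact/monic_neq0/char_poly_monic.
by rewrite mup_geq // polyCN opprK defM dvdp_mulIl.
Qed.

Lemma sqrt_twice_sqr (R : rcfType) (x : R) :
  0 <= x -> Num.sqrt (x ^+ 2 + x ^+ 2) = x * Num.sqrt 2.
Proof.
move=> x0; rewrite -mulr2n -(mulr_natr (x ^+ 2)) sqrtrM ?sqr_ge0 //.
by rewrite sqrtr_sqr ger0_norm.
Qed.

Lemma sombor_twins_mup (R : rcfType) (T : finType) (V : {set T}) (adj : rel T)
    (X : {set T}) (pv : T -> T) (d : nat) :
    symmetric adj -> irreflexive adj -> X \subset V ->
    {in X, forall u, [/\ pv u \in V :\: X, adj u (pv u), gdeg V adj u = d,
       gdeg V adj (pv u) = d &
       {in V, forall w, w != u -> w != pv u -> adj u w = adj (pv u) w}]} ->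
  (#|X| <= mup (- (d%:R * Num.sqrt 2)) (char_poly (sombor_matrix R V adj)))%N.
Proof.
move=> adjC adj0 XV twins; have [->|[u0 Xu0]] := set_0Vmem X; first by rewrite cards0.
have Vu0 : u0 \in V := subsetP XV u0 Xu0.
pose ev := @enum_val T (mem V).
pose J := [set i | ev i \in X].
pose p i := enum_rank_in Vu0 (pv (ev i)).
have pE i : i \in J -> ev (p i) = pv (ev i).
  by rewrite inE => /twins[/setDP[pvV _] _ _ _ _]; rewrite /p /ev enum_rankK_in.
have -> : X = ev @: J.
  apply/setP => x; apply/idP/imsetP => [Xx|[i]]; last by rewrite inE => Xi ->.
  by exists (enum_rank_in Vu0 x); rewrite ?inE /ev enum_rankK_in // (subsetP XV).
rewrite card_imset; last exact: enum_val_inj.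
apply: (char_poly_twin_rows (p := p)) => i; rewrite inE => Xi;
  have [/setDP[pvV pvX] adj_uv du dv adj_same] := twins _ Xi.
  by rewrite inE pE ?inE.
have sombor_d : Num.sqrt ((d%:R : R) ^+ 2 + d%:R ^+ 2) = d%:R * Num.sqrt 2.
  exact: sqrt_twice_sqr.
have nuv : ev i != pv (ev i) by apply: contraNneq pvX => <-.
have npi : p i != i by apply: contra nuv => /eqP pii; rewrite -{1}pii pE ?inE.
move=> j; rewrite !mxE /= -/ev pE ?inE //.
have [<-|nij] := eqVneq i j.
  by rewrite adj0 adjC adj_uv du dv sombor_d (negbTE npi) /= !sub0r mulrN1.
have [<-|npj] := eqVneq (p i) j.
  by rewrite pE ?inE // adj0 adj_uv du dv sombor_d /= !subr0 mulr1.
have nju : enum_val j != ev i by apply: contraNneq nij => /enum_val_inj ->.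
have njv : enum_val j != pv (ev i).
  by rewrite -pE ?inE //; apply: contraNneq npj => /enum_val_inj ->.
by rewrite -adj_same ?enum_valP // du dv subrr subrr mulr0.
Qed.

Lemma power_adj_sym (gT : finGroupType) : symmetric (@power_adj gT).
Proof. by move=> x y; rewrite /power_adj eq_sym orbC. Qed.

Lemma cspg_adj_sym (gT : finGroupType) (G : {group gT}) : symmetric (cspg_adj G).
Proof.
move=> g h; rewrite /cspg_adj eq_sym class_sym; congr (_ && (_ || _)).
by apply/exists_inP/exists_inP => -[x xG /exists_inP[y yG xy]];
  exists y => //; apply/exists_inP; exists x; rewrite // power_adj_sym.
Qed.

Lemma cspg_adj_irr (gT : finGroupType) (G : {set gT}) : irreflexive (cspg_adj G).
Proof. by move=> g; rewrite /cspg_adj eqxx. Qed.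

Section GeneralizedQuaternion.

Local Open Scope group_scope.

Variables (gT : finGroupType) (G : {group gT}) (a b : gT) (n : nat).
Hypotheses (n_gt0 : (0 < n)%N) (defG : G :=: <<[set a; b]>>)
  (a2n : a ^+ (2 * n) = 1) (an_b2 : a ^+ n = b ^+ 2) (ba : b * a = a^-1 * b)
  (cardG : #|G| = (4 * n)%N).

Local Notation A := <[a]>.
Local Notation A2 := <[a ^+ 2]>.
Local Notation K := (A2 :|: A2 :* a ^+ n).

Lemma a_in_G : a \in G.
Proof. by rewrite defG mem_gen // !inE eqxx. Qed.

Lemma b_in_G : b \in G.
Proof. by rewrite defG mem_gen // !inE eqxx orbT. Qed.

Lemma A_sub_G : A \subset G.
Proof. by rewrite cycle_subG a_in_G. Qed.

Lemma mulb_cycle x : x \in A -> b * x = x^-1 * b.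
Proof.
case/cycleP=> k ->; elim: k => [|k IHk]; first by rewrite expg0 invg1 mulg1 mul1g.
by rewrite expgS mulgA ba -mulgA IHk mulgA -invMg -expgSr expgS.
Qed.

Lemma commute_cycle_a x y : x \in A -> y \in A -> commute x y.
Proof. by move=> /cycleP[i ->] /cycleP[j ->]; apply: commuteX2. Qed.

Lemma conjb_cycle x : x \in A -> x ^ b = x^-1.
Proof.
by move=> Ax; rewrite conjgE -{1}(invgK x) -mulb_cycle ?groupV // mulKg.
Qed.

Lemma norm_cycle_a : G \subset 'N(A).
Proof.
rewrite defG gen_subG; apply/subsetP => x /set2P[]->.
  by rewrite -cycle_subG normG.
by rewrite inE -cycleJ conjb_cycle ?cycle_id // cycleV.
Qed.

Lemma commute_an x : x \in G -> commute x (a ^+ n).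
Proof.
have : G \subset 'C[a ^+ n].
  rewrite defG gen_subG; apply/subsetP => y /set2P[]->.
    exact/cent1P/commuteX.
  by rewrite an_b2; apply/cent1P/commuteX.
by move/subsetP => cGan /cGan /cent1P.
Qed.

Lemma an_in_A : a ^+ n \in A.
Proof. exact: mem_cycle. Qed.

Lemma an_in_G : a ^+ n \in G.
Proof. exact: subsetP A_sub_G _ an_in_A. Qed.

Lemma an_sqr : a ^+ n * a ^+ n = 1.
Proof. by rewrite -expgD addnn -mul2n. Qed.

Lemma mulbb : b * b = a ^+ n.
Proof. by rewrite an_b2 expgS expg1. Qed.

Lemma cover_G : G \subset A :|: A :* b.
Proof.
have coset_b z : z \in A :* b -> exists2 z', z' \in A & z = z' * b.
  by rewrite mem_rcoset => Azb; exists (z * b^-1); rewrite ?mulgKV.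
have AAb_group : group_set (A :|: A :* b).
  apply/group_setP; split=> [|x y]; first by rewrite inE group1.
  rewrite !inE => /orP[Ax|/coset_b[x' Ax' ->]] /orP[Ay|/coset_b[y' Ay' ->]].
  - by rewrite groupM.
  - by apply/orP; right; rewrite mulgA mem_rcoset mulgK groupM.
  - apply/orP; right; rewrite -mulgA mulb_cycle // mulgA mem_rcoset mulgK.
    by rewrite groupM ?groupV.
  - apply/orP; left; rewrite mulgA -(mulgA x') mulb_cycle // !mulgA.
    by rewrite -(mulgA _ b b) mulbb !groupM ?groupV ?an_in_A.
rewrite defG (gen_subG _ (Group AAb_group)) /=.
apply/subsetP => x /set2P[]->; rewrite !inE mem_rcoset ?cycle_id //.
by rewrite mulgV group1 orbT.
Qed.

Lemma order_a : #[a] = (2 * n)%N.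
Proof.
have le_a : (#[a] <= 2 * n)%N by rewrite dvdn_leq ?muln_gt0 // order_dvdn a2n.
have : (#|G| <= #|A| + #|A :* b|)%N.
  by rewrite (leq_trans (subset_leq_card cover_G)) ?cardsU ?leq_subr.
by rewrite card_rcoset cardG -/#[a]; lia.
Qed.

Lemma b_notin_A : b \notin A.
Proof.
apply: contraTN n_gt0 => Ab.
have : G \subset A.
  by rewrite defG gen_subG; apply/subsetP => x /set2P[]->; rewrite ?cycle_id.
move/subset_leq_card; rewrite cardG -/#[a] order_a; lia.
Qed.

Lemma outsideP u : reflect (exists2 y, y \in A & u = y * b) (u \in G :\: A).
Proof.
apply: (iffP setDP) => [[Gu nAu]|[y Ay ->]].
  have := subsetP cover_G u Gu; rewrite inE (negbTE nAu) mem_rcoset /=.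
  by exists (u * b^-1); rewrite ?mulgKV.
split; first by rewrite groupM ?b_in_G ?(subsetP A_sub_G).
by apply: contra b_notin_A => Ayb; rewrite -(mulKg y b) groupM ?groupV.
Qed.

Lemma an_neq1 : a ^+ n != 1.
Proof. by rewrite -order_dvdn order_a; apply/negP => /dvdn_leq; lia. Qed.

Lemma conjg_an g : g \in G -> (a ^+ n) ^ g = a ^+ n.
Proof. by move=> Gg; rewrite conjgE -(commute_an Gg) mulKg. Qed.

Lemma mulgg_outside u : u \in G :\: A -> u * u = a ^+ n.
Proof.
case/outsideP=> y Ay ->.
by rewrite mulgA -(mulgA y) mulb_cycle // mulgA mulgV mul1g mulbb.
Qed.

Lemma cycle_outside u : u \in G :\: A -> <[u]> = [set 1; a ^+ n; u; a ^+ n * u].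
Proof.
move=> Au; have uu := mulgg_outside Au; apply/eqP; rewrite eqEsubset; apply/andP; split.
  apply/subsetP => _ /cycleP[k ->]; elim: k => [|k]; first by rewrite !inE eqxx.
  rewrite expgSr !inE -!orbA => /or4P[]/eqP->.
  - by rewrite mul1g eqxx !(orbT, orTb).
  - by rewrite eqxx !(orbT, orTb).
  - by rewrite uu eqxx !(orbT, orTb).
  - by rewrite -mulgA uu an_sqr eqxx.
apply/subsetP => x; rewrite !inE -!orbA => /or4P[]/eqP->; rewrite ?group1 ?cycle_id //.
  by rewrite -uu groupM ?cycle_id.
by rewrite -uu !groupM ?cycle_id.
Qed.

Lemma power_adj_outside g h : g \in G :\: A -> h \in G ->
  power_adj g h = (h \in [set 1; a ^+ n; a ^+ n * g]).
Proof.
move=> Ag Gh; have nAg : g \notin A by case/setDP: Ag.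
apply/idP/idP => [/andP[ngh /orP[gh|hg]]|].
  have Ah : h \in G :\: A.
    rewrite inE Gh andbT; apply: contra nAg => Ah.
    by apply: subsetP gh; rewrite cycle_subG.
  move: gh; rewrite cycle_outside // !inE (negbTE ngh) orbF -!orbA.
  case/or3P=> /eqP gE; move: nAg; rewrite gE ?group1 ?an_in_A // => _.
  by rewrite mulgA an_sqr mul1g eqxx !(orbT, orTb).
  by move: hg; rewrite cycle_outside // !inE [h == g]eq_sym (negbTE ngh) orbF.
rewrite /power_adj (cycle_outside Ag) !inE -!orbA => /or3P[]/eqP->;
  rewrite eqxx !(orbT, orTb) andbT.
- by apply: contraNneq nAg => ->.
- by apply: contraNneq nAg => ->; rewrite an_in_A.
- by rewrite -{1}[g]mul1g (inj_eq (mulIg g)) eq_sym an_neq1.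
Qed.

Lemma conjg_outside u g : u \in G :\: A -> g \in G -> u ^ g \in G :\: A.
Proof.
move=> /setDP[Gu nAu] Gg.
by rewrite inE (groupJ Gu Gg) andbT memJ_norm ?(subsetP norm_cycle_a).
Qed.

Lemma an_mul_outside u : u \in G :\: A -> a ^+ n * u \in G :\: A.
Proof.
move=> /setDP[Gu nAu]; rewrite inE (groupM an_in_G Gu) andbT.
by apply: contra nAu => Anu; rewrite -(mulKg (a ^+ n) u) groupM ?groupV ?an_in_A.
Qed.

Lemma class_an_mul u v : v \in u ^: G -> a ^+ n * v \in (a ^+ n * u) ^: G.
Proof. by case/imsetP=> g Gg ->; rewrite -{1}(conjg_an Gg) -conjMg memJ_class. Qed.

Definition twin_class u := u ^: G :|: (a ^+ n * u) ^: G.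

Lemma twin_class_refl u : u \in twin_class u.
Proof. by rewrite inE class_refl. Qed.

Lemma twin_class_sub u : u \in G :\: A -> twin_class u \subset G :\: A.
Proof.
move=> Au; apply/subsetP => _ /setUP[]/imsetP[g Gg ->]; apply: conjg_outside => //.
exact: an_mul_outside.
Qed.

Lemma cspg_adj_outside u w : u \in G :\: A -> w \in G ->
  cspg_adj G u w = (w != u) && (w \in [set 1; a ^+ n] :|: twin_class u).
Proof.
move=> Au Gw; rewrite /cspg_adj [u == w]eq_sym; case: eqVneq => //= nwu.
rewrite class_sym /twin_class !inE -!orbA; apply/idP/idP.
  case/orP=> [->|]; first by rewrite !orbT.
  case/exists_inP=> _ /imsetP[x Gx ->] /exists_inP[_ /imsetP[y Gy ->]].
  rewrite power_adj_outside ?conjg_outside ?groupJ // !inE -!orbA.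
  case/or3P=> /eqP/(canRL (conjgK y)) wE.
  - by rewrite wE conj1g eqxx.
  - by rewrite wE conjg_an ?groupV // eqxx orbT.
  suff -> : w \in (a ^+ n * u) ^: G by rewrite !orbT.
  by rewrite wE -{1}(conjg_an Gx) -conjMg -conjgM memJ_class ?groupM ?groupV.
case/or4P=> [/eqP->|/eqP->|->//|/imsetP[g Gg ->]]; apply/orP; right.
- apply/exists_inP; exists u; rewrite ?class_refl //; apply/exists_inP.
  by exists 1; rewrite ?class_refl // power_adj_outside // !inE eqxx.
- apply/exists_inP; exists u; rewrite ?class_refl //; apply/exists_inP.
  exists (a ^+ n); rewrite ?class_refl // power_adj_outside ?an_in_G //.
  by rewrite !inE eqxx orbT.
apply/exists_inP; exists (u ^ g); rewrite ?memJ_class //; apply/exists_inP.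
have Gu : u \in G by case/setDP: Au.
exists ((a ^+ n * u) ^ g); rewrite ?class_refl // power_adj_outside ?conjg_outside //.
  by rewrite conjMg conjg_an // !inE eqxx !orbT.
by rewrite groupJ ?groupM ?an_in_G.
Qed.

Lemma gdeg_outside u :
  u \in G :\: A -> gdeg G (cspg_adj G) u = #|twin_class u|.+1.
Proof.
move=> Au; rewrite /gdeg; have TC_out := subsetP (twin_class_sub Au).
have TC_A x : x \in A -> x \notin twin_class u.
  by move=> Ax; apply: contraL Ax => /TC_out/setDP[].
have -> : [set w in G | cspg_adj G u w] = ([set 1; a ^+ n] :|: twin_class u) :\ u.
  have NG : [set 1; a ^+ n] :|: twin_class u \subset G.
    rewrite subUset (subset_trans (twin_class_sub Au) (subsetDl G A)) andbT.
    by rewrite subUset !sub1set group1 an_in_G.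
  apply/setP => w; rewrite inE in_setD1; case Gw: (w \in G).
    by rewrite cspg_adj_outside.
  by apply/esym/negbTE; rewrite negb_and (contraFN (subsetP NG w)) ?orbT.
have := cardsD1 u ([set 1; a ^+ n] :|: twin_class u).
rewrite in_setU twin_class_refl orbT -setUA !cardsU1 !in_setU1.
by rewrite [1 == _]eq_sym (negbTE an_neq1) !(negbTE (TC_A _ _)) ?an_in_A //= => /addnI <-.
Qed.

Lemma twin_class_eq u v :
  u \in G :\: A -> v \in twin_class u -> twin_class v = twin_class u.
Proof.
rewrite /twin_class => Au /setUP[] vu.
  by rewrite (class_eqP vu) (class_eqP (class_an_mul vu)).
have Gu : u \in G by case/setDP: Au.
rewrite setUC (class_eqP vu); congr (_ :|: _); apply/class_eqP.
by rewrite -[u]mul1g -an_sqr -mulgA class_an_mul.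
Qed.

Lemma cspg_twins u v : v \in G :\: A -> u \in twin_class v -> u != v ->
  [/\ cspg_adj G u v, gdeg G (cspg_adj G) u = #|twin_class v|.+1,
      gdeg G (cspg_adj G) v = #|twin_class v|.+1 &
      {in G, forall w, w != u -> w != v -> cspg_adj G u w = cspg_adj G v w}].
Proof.
move=> Av TCu nuv; have Au := subsetP (twin_class_sub Av) u TCu.
have TCuv := twin_class_eq Av TCu.
have Gv : v \in G by case/setDP: Av.
split; rewrite ?gdeg_outside ?TCuv //.
  by rewrite cspg_adj_outside // TCuv eq_sym nuv in_setU twin_class_refl orbT.
by move=> w Gw nwu nwv; rewrite !cspg_adj_outside // TCuv nwu nwv.
Qed.

Lemma conj_cycle_mulb x z :
  x \in A -> z \in A -> (z * b) ^ x = x^-1 * x^-1 * (z * b).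
Proof.
move=> Ax Az; rewrite conjgE -mulgA mulb_cycle // !mulgA.
by rewrite -(mulgA x^-1 z) (commute_cycle_a Az (groupVr Ax)) mulgA.
Qed.

Lemma conjb_mulb z : z \in A -> (z * b) ^ b = z^-1 * b.
Proof. by move=> Az; rewrite conjMg conjb_cycle // conjgE mulKg. Qed.

Lemma mulgg_cycle x : x \in A -> x * x \in A2.
Proof. by case/cycleP=> k ->; rewrite -expgD addnn -mul2n expgM mem_cycle. Qed.

Lemma class_mulb y : y \in A -> (y * b) ^: G = A2 :* (y * b).
Proof.
move=> Ay; apply/setP => w; apply/imsetP/rcosetP => [[g Gg ->]|[s]].
  have := subsetP cover_G g Gg; rewrite inE => /orP[Ag|/rcosetP[x Ax ->]].
    by exists (g^-1 * g^-1); rewrite ?conj_cycle_mulb ?mulgg_cycle ?groupV.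
  have Axy : x^-1 * x^-1 * y \in A by rewrite !groupM ?groupV.
  rewrite conjgM conj_cycle_mulb // mulgA conjb_mulb //.
  exists (x * x * (y^-1 * y^-1)); first by rewrite groupM ?mulgg_cycle ?groupV.
  rewrite !invMg !invgK !mulgA mulgKV -(mulgA y^-1).
  by rewrite (commute_cycle_a (groupVr Ay) (groupM Ax Ax)).
case/cycleP=> m -> ->; exists (a ^- m); first by rewrite groupV groupX ?a_in_G.
by rewrite conj_cycle_mulb ?groupV ?mem_cycle // invgK -expgD addnn -mul2n expgM.
Qed.

Lemma twin_class_mulb y :
  y \in A -> twin_class (y * b) = K :* (y * b).
Proof.
move=> Ay; rewrite /twin_class [a ^+ n * _]mulgA !class_mulb ?groupM ?an_in_A //.
by rewrite mulUg -rcosetM mulgA.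
Qed.

Lemma mem_twin_class_mulb y c :
  y \in A -> c \in A -> (y * b \in twin_class (c * b)) = (y * c^-1 \in K).
Proof.
by move=> Ay Ac; rewrite twin_class_mulb // mem_rcoset invMg mulgA mulgK.
Qed.

Lemma card_twin_class u :
  u \in G :\: A -> #|twin_class u| = #|K|.
Proof. by case/outsideP=> y Ay ->; rewrite twin_class_mulb // card_rcoset. Qed.

Lemma card_outside : #|G :\: A| = (2 * n)%N.
Proof. by rewrite cardsD (setIidPr A_sub_G) cardG -/#[a] order_a; lia. Qed.

Lemma sombor_mup_twin_reps (R : rcfType) (P : {set gT}) :
    P \subset G :\: A ->
    {in G :\: A, forall u, exists2 v, v \in P & u \in twin_class v} ->
  (2 * n - #|P| <= mup (- (#|K|.+1%:R * Num.sqrt 2))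
                     (char_poly (sombor_matrix R G (cspg_adj G))))%N.
Proof.
move=> PA reps; pose pv u := odflt u [pick v in P | u \in twin_class v].
have pvP u : u \in G :\: A -> pv u \in P /\ u \in twin_class (pv u).
  move/reps=> [v Pv TCv]; rewrite /pv; case: pickP => [w /andP[]//|none].
  by have := none v; rewrite Pv TCv.
have -> : (2 * n - #|P| = #|(G :\: A) :\: P|)%N.
  by rewrite cardsD (setIidPr PA) card_outside.
apply: (@sombor_twins_mup R _ G _ _ pv) (cspg_adj_sym G) (cspg_adj_irr G) _ _.
  exact: subset_trans (subsetDl _ _) (subsetDl _ _).
move=> u /setDP[Au nPu]; have [Ppv TCu] := pvP u Au.
have Apv := subsetP PA _ Ppv; have /setDP[Gpv _] := Apv.
have nu_pv : u != pv u by apply: contraNneq nPu => ->.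
have [adj_u deg_u deg_pv same] := cspg_twins Apv TCu nu_pv.
by split; rewrite ?inE ?Ppv ?Gpv ?deg_u ?deg_pv ?card_twin_class.
Qed.

Lemma a_even_pow k : ~~ odd k -> a ^+ k \in A2.
Proof.
by move=> ek; rewrite -(odd_double_half k) (negbTE ek) -mul2n expgM mem_cycle.
Qed.

Lemma cycle_a_parity : A = A2 :|: A2 :* a.
Proof.
apply/eqP; rewrite eqEsubset subUset cycleX; apply/andP; split.
  apply/subsetP => _ /cycleP[[|k] ->]; rewrite inE ?group1 // mem_rcoset.
  case ek: (odd k); first by rewrite a_even_pow //= ek.
  by rewrite expgSr mulgK a_even_pow ?ek ?orbT.
apply/subsetP => _ /rcosetP[s /(subsetP (cycleX a 2)) As ->].
by rewrite groupM ?cycle_id.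
Qed.

Lemma twin_coset_even : ~~ odd n -> K = A2.
Proof. by move=> en; rewrite rcoset_id ?setUid ?a_even_pow. Qed.

Lemma twin_coset_odd : odd n -> K = A.
Proof.
move=> on; rewrite cycle_a_parity; congr (_ :|: _); apply/rcoset_eqP.
by rewrite mem_rcoset -{1}(prednK n_gt0) expgSr mulgK a_even_pow // -oddS prednK.
Qed.

Lemma card_cycle_a2 : #|A2| = n.
Proof. by rewrite -/#[a ^+ 2] orderXdiv order_a ?mulKn ?dvdn_mulr. Qed.

Lemma sombor_mup_odd (R : rcfType) : odd n ->
  (2 * n - 1 <= mup (- ((2 * n).+1%:R * Num.sqrt 2))
                  (char_poly (sombor_matrix R G (cspg_adj G))))%N.
Proof.
move=> on; have := @sombor_mup_twin_reps R [set 1 * b].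
rewrite cards1 twin_coset_odd // (order_a : #|A| = _); apply.
  by rewrite sub1set; apply/outsideP; exists 1.
move=> _ /outsideP[y Ay ->]; exists (1 * b); first exact: set11.
by rewrite mem_twin_class_mulb // twin_coset_odd // invg1 mulg1.
Qed.

Lemma sombor_mup_even (R : rcfType) : ~~ odd n ->
  (2 * n - 2 <= mup (- ((n.+1)%:R * Num.sqrt 2))
                  (char_poly (sombor_matrix R G (cspg_adj G))))%N.
Proof.
move=> en; have nab : 1 * b != a * b.
  by rewrite (inj_eq (mulIg b)) eq_sym -order_gt1 order_a; lia.
have := @sombor_mup_twin_reps R [set 1 * b; a * b].
rewrite cards2 nab twin_coset_even // card_cycle_a2; apply.
  by rewrite subUset !sub1set; apply/andP; split; apply/outsideP;
    [exists 1 | exists a]; rewrite ?cycle_id.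
move=> _ /outsideP[y Ay ->]; move: (Ay); rewrite cycle_a_parity inE mem_rcoset.
case/orP=> [y_even|y_odd]; [exists (1 * b); first exact: set21
                          | exists (a * b); first exact: set22].
  by rewrite mem_twin_class_mulb // twin_coset_even // invg1 mulg1.
by rewrite mem_twin_class_mulb ?cycle_id // twin_coset_even.
Qed.

End GeneralizedQuaternion.

Theorem theorem6p10 (R : rcfType) (gT : finGroupType) (G : {group gT})
  (a b : gT) (n : nat) :
  (2 <= n)%N ->
  G :=: <<[set a; b]>>%g ->
  (a ^+ (2 * n) = 1)%g -> (a ^+ n = b ^+ 2)%g -> (b * a = a^-1 * b)%g ->
  #|G| = (4 * n)%N ->
  (~~ odd n ->
     (2 * n - 2 <= mup (- ((n.+1)%:R * Num.sqrt 2) : R)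
                     (char_poly (sombor_matrix R G (cspg_adj G))))%N) /\
  (odd n ->
     (2 * n - 1 <= mup (- ((2 * n).+1%:R * Num.sqrt 2) : R)
                     (char_poly (sombor_matrix R G (cspg_adj G))))%N).
Proof.
move=> /ltnW n_gt0 defG a2n an_b2 ba cardG; split.
  exact: (sombor_mup_even n_gt0 defG a2n an_b2 ba cardG).
exact: (sombor_mup_odd n_gt0 defG a2n an_b2 ba cardG).
Qed.
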